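(* Define integers $Q(n)$ by $Q(0)=0$, $Q(1)=1$ and $Q(n)=b(n)Q(n-1)+Q(n-2)$ for $n\ge2$, where $b(n)=2n/3$ if $3\mid n$ and $b(n)=1$ if $3\nmid n$. Let $n>1$ be an integer and let $N$ be the unique integer with $3N\le n<3(N+1)$. If $m$ is a positive integer with $Q(n)\le m!$, then $N<m$ and $n<3m$.
   Context: $Q(n)$ is the denominator of the $n$th convergent of the simple continued fraction $e=[2,1,2,1,1,4,1,1,6,\dots]$; its first values are $0,1,1,3,4,7,32,39,71,465,\dots$. *)

From mathcomp Require Import all_boot.

Definition b (n : nat) : nat := if 3 %| n then (2 * n) %/ 3 else 1.

(* Pair (Q n, Q n.+1) computed by the recurrence Q(n+2) = b(n+2) Q(n+1) + Q(n). *)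
Fixpoint Qpair (n : nat) : nat * nat :=
  match n with
  | 0 => (0, 1)
  | k.+1 => let: (a, c) := Qpair k in (c, b k.+2 * c + a)
  end.

Definition Q (n : nat) : nat := (Qpair n).1.

Lemma Q0 : Q 0 = 0. Proof. by []. Qed.
Lemma Q1 : Q 1 = 1. Proof. by []. Qed.
Lemma QS (n : nat) : Q n.+2 = b n.+2 * Q n.+1 + Q n.
Proof. rewrite /Q /=; by case: (Qpair n). Qed.

(* Every third partial quotient of e is large: b(3k) = 2k, so
   Q(3(k+1)) >= 2(k+1) Q(3k+2) >= 2(k+1) Q(3k) >= 2(k+1)!.  Since Q and the
   factorial are nondecreasing, N >= m >= 1 would give
   Q(n) >= Q(3N) >= 2 N! >= 2 m! > m!. *)

From mathcomp Require Import all_boot.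
From mathcomp Require Import zify.

Lemma b_gt0 n : 0 < n -> 0 < b n.
Proof. by rewrite /b; case: ifP => // /dvdnP [k ->]; rewrite mulnA mulnK //; lia. Qed.

Lemma b_mul3 k : b (3 * k) = 2 * k.
Proof. by rewrite /b dvdn_mulr // mulnCA mulKn. Qed.

Lemma leq_Q : {homo Q : i j / i <= j}.
Proof.
apply: homo_leq => [//|y x z|[//|i]]; first exact: leq_trans.
rewrite QS; have := b_gt0 i.+2 isT; nia.
Qed.

Lemma leq_fact : {homo factorial : i j / i <= j}.
Proof.
apply: homo_leq => [//|y x z|i]; first exact: leq_trans.
by rewrite factS leq_pmull.
Qed.

Lemma fact_leq_Q_mul3 k : 2 * k.+1`! <= Q (3 * k.+1).
Proof.
elim: k => [//|k IHk].
have -> : 3 * k.+2 = (3 * k.+1).+1.+2 by lia.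
rewrite QS.
have -> : b (3 * k.+1).+1.+2 = 2 * k.+2 by rewrite -b_mul3; congr b; lia.
rewrite factS.
have : Q (3 * k.+1) <= Q (3 * k.+1).+2 by apply: leq_Q; lia.
nia.
Qed.

Theorem lemmaA3 (n N m : nat) :
  1 < n -> 3 * N <= n < 3 * N.+1 -> 0 < m -> Q n <= m`! ->
  N < m /\ n < 3 * m.
Proof.
move=> n_gt1 /andP [le_3N_n lt_n_3N1] m_gt0 le_Qn_fact.
suff lt_N_m : N < m by split => //; lia.
rewrite ltnNge; apply/negP => le_m_N.
case: N le_3N_n lt_n_3N1 le_m_N => [|N] le_3N_n _ le_m_N; first lia.
have Q_big := fact_leq_Q_mul3 N.
have le_Q_Qn : Q (3 * N.+1) <= Q n := leq_Q _ _ le_3N_n.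
have le_fact := leq_fact _ _ le_m_N.
have := fact_gt0 m.
lia.
Qed.
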